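(* For any graph function $\alpha$ on a strongly connected digraph $G$ with $n$ vertices, we have $h\le(n-1)\sum_v\rho^R_v$, where $h=\max_v y_v-\min_v y_v$.
   Context: $G$ is a strongly connected directed graph on vertex set $\{1,\dots,n\}$ (self-loops allowed); a graph function assigns a real weight $\alpha_{uv}$ to each edge. $\alpha_v^{\text{in}}=\max_{u:(u,v)\in G}\alpha_{uv}$, $\alpha_v^{\text{out}}=\max_{w:(v,w)\in G}\alpha_{vw}$, $\rho^R_v=\max\{0,\alpha_v^{\text{out}}-\alpha_v^{\text{in}}\}$. A raising operation at $v$: if $\rho^R_v>0$ add $\rho^R_v/2$ to each incoming edge weight $\alpha_{uv}$ ($u\ne v$) and subtract it from each outgoing $\alpha_{vw}$ ($w\neq v$); otherwise do nothing. Starting from $\alpha$, for any infinite sequence of raising operations in which every vertex occurs infinitely often, the cumulative amount $r_v(t)$ by which each vertex has been raised (sum of the increments $\rho^R_v/2$ over operations at $v$) converges to a limit vector $r^*$ that does not depend on the sequence. The heights are $y_v=-r^*_v$. *)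

From HB Require Import structures.
From mathcomp Require Import all_boot all_order all_algebra.
From mathcomp Require Import all_classical all_reals all_analysis.
Set Implicit Arguments. Unset Strict Implicit. Unset Printing Implicit Defensive.
Import Order.TTheory GRing.Theory Num.Theory.
Local Open Scope ring_scope.

Section GraphFun.
Variables (R : realType) (n : nat).
Implicit Types (G : rel 'I_n) (alpha : 'I_n -> 'I_n -> R).

Definition strongly_connected G := forall u v : 'I_n, connect G u v.

(* alpha_v^in = max over in-edges (u,v); the default alpha u0 v is itself an
   in-edge weight when an in-edge exists (max is idempotent), so it does not
   affect the value. *)
Definition alpha_in G alpha (v : 'I_n) : R :=
  \big[Num.max/alpha (odflt v [pick u | G u v]) v]_(u | G u v) alpha u v.

Definition alpha_out G alpha (v : 'I_n) : R :=
  \big[Num.max/alpha v (odflt v [pick w | G v w])]_(w | G v w) alpha v w.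

Definition rhoR G alpha (v : 'I_n) : R :=
  Num.max 0 (alpha_out G alpha v - alpha_in G alpha v).

Definition raise G (v : 'I_n) alpha : 'I_n -> 'I_n -> R :=
  let d := rhoR G alpha v / 2 in
  fun a b =>
    if G a b && (b == v) && (a != v) then alpha a b + d
    else if G a b && (a == v) && (b != v) then alpha a b - d
    else alpha a b.

Fixpoint state G (s : nat -> 'I_n) alpha (t : nat) : 'I_n -> 'I_n -> R :=
  match t with
  | 0 => alpha
  | t'.+1 => raise G (s t') (state G s alpha t')
  end.

Definition raised G (s : nat -> 'I_n) alpha (v : 'I_n) (t : nat) : R :=
  \sum_(k < t | s k == v) rhoR G (state G s alpha k) v / 2.

Definition fair (s : nat -> 'I_n) := forall (v : 'I_n) (N : nat),
  exists k, (N <= k)%N /\ s k = v.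

(* max and min of a real function on a finite type (0 on the empty type) *)
Definition fmax (T : finType) (f : T -> R) : R :=
  if [pick x : T] is Some x0 then \big[Num.max/f x0]_x f x else 0.
Definition fmin (T : finType) (f : T -> R) : R :=
  if [pick x : T] is Some x0 then \big[Num.min/f x0]_x f x else 0.

End GraphFun.

(* The raising dynamics is monotone: no vertex is ever raised above a nonnegative
   potential p that balances alpha, i.e. such that after adding p_w - p_v to the
   weight of each edge (v, w), every vertex has out-weight at most its in-weight.
   So the limit r* lies below every such p; it balances alpha itself because
   the increments at each vertex tend to 0.  Thus r* is the least nonnegative
   balancing potential.
   Let U be a set of vertices whose r*-values exceed all the others by a gap.
   Minimality of r* makes in- and out-weights equal on U, and forbids lowering
   any subset of U closed under maximal out-edges; this forces an edge leaving U
   whose shifted weight reaches the largest in-weight L on U.  Following the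
   vertex of U of largest potential with an out-edge above a level th shows
   that every th in [L, L + gap) satisfies alpha_in y <= th < alpha_out y for
   some y in U, so the gap is at most sum_v rho^R_v.  Hence consecutive values
   of r* differ by at most sum_v rho^R_v, and there are at most n of them. *)

From HB Require Import structures.
From mathcomp Require Import all_boot all_order all_algebra.
From mathcomp Require Import all_classical all_reals all_analysis.
From mathcomp Require Import lra zify.
Set Implicit Arguments. Unset Strict Implicit. Unset Printing Implicit Defensive.
Import Order.TTheory GRing.Theory Num.Theory numFieldNormedType.Exports.
Local Open Scope ring_scope.

Section RealFiniteFacts.
Variable R : realType.

Lemma bigmax_attained (T : finType) (P : pred T) (F : T -> R) j0 : P j0 ->
  exists2 j, P j & \big[Num.max/F j0]_(i | P i) F i = F j.
Proof.
move=> Pj0; case: (arg_maxP F Pj0) => j Pj Fj; exists j => //.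
apply/eqP; rewrite eq_le le_bigmax_cond // andbT.
by apply: bigmax_le => [|i Pi]; apply: Fj.
Qed.

Lemma bigmin_attained (T : finType) (P : pred T) (F : T -> R) j0 : P j0 ->
  exists2 j, P j & \big[Num.min/F j0]_(i | P i) F i = F j.
Proof.
move=> Pj0; case: (arg_minP F Pj0) => j Pj Fj; exists j => //.
apply/eqP; rewrite eq_le bigmin_le_cond //.
by apply: le_bigmin => [|i Pi]; apply: Fj.
Qed.

Lemma fmax_sub_fmin_le (T : finType) (f : T -> R) c : 0 <= c ->
  (forall a b, f a - f b <= c) -> fmax f - fmin f <= c.
Proof.
rewrite /fmax /fmin; case: pickP => [x0 _|_] c0 fc; last by rewrite subrr.
have [a _ ->] := @bigmax_attained _ predT f x0 isT.
by have [b _ ->] := @bigmin_attained _ predT f x0 isT.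
Qed.

Lemma exists_pos_lower_bound (T : finType) (P : pred T) (f : T -> R) :
  (forall x, P x -> 0 < f x) -> exists2 e, 0 < e & forall x, P x -> e <= f x.
Proof.
move=> f_gt0; exists (\big[Num.min/1]_(x | P x) f x).
  by apply: (big_ind (fun x => 0 < x)) => // x y x0 y0; rewrite lt_min x0 y0.
by move=> x Px; apply: bigmin_le_cond.
Qed.

Lemma range_le_card_mul (T : finType) (f : T -> R) (c : R) : 0 <= c ->
  (forall a b, f a < f b -> exists2 v, f a < f v & f v <= f a + c) ->
  forall a b, f b - f a <= (#|T|.-1)%:R * c.
Proof.
move=> c0 next.
pose above a := [set w | f a < f w].
suff chain k a b : (#|above a| <= k)%N -> f b - f a <= #|above a|%:R * c.
  move=> a b; apply: le_trans (chain _ a b (leqnn _)) _.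
  have T_gt0 : (0 < #|T|)%N by apply/card_gt0P; exists a.
  rewrite ler_wpM2r // ler_nat -ltnS prednK //.
  by rewrite -cardsT proper_card // properT; apply/eqP => /setP/(_ a); rewrite !inE ltxx.
elim: k a => [|k IH] a ka.
  have above0 : #|above a| = 0%N by lia.
  rewrite above0 mul0r subr_le0 leNgt; apply/negP => ab.
  by move/eqP: above0; rewrite cards_eq0 => /eqP/setP/(_ b); rewrite !inE ab.
have [ba|ab] := leP (f b) (f a).
  by apply: le_trans (_ : 0 <= _); rewrite ?subr_le0 // mulr_ge0.
have [v av vc] := next a b ab.
have sub : above v \proper above a.
  apply/properP; split; last by exists v; rewrite !inE ?ltxx.
  by apply/fintype.subsetP => w; rewrite !inE => /(lt_trans av).
have lt := proper_card sub.
have := IH v; rewrite -ltnS => /(_ (leq_trans lt ka)) vb.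
apply: le_trans (_ : (#|above v|.+1)%:R * c <= _); last by rewrite ler_wpM2r // ler_nat.
by rewrite -natr1 mulrDl mul1r; lra.
Qed.

Lemma cover_le_sum_lengths (T : finType) (A : {set T})
    (a b : T -> R) (L H : R) :
  (forall th, L <= th -> th < L + H -> exists2 y, y \in A & a y <= th < b y) ->
  H <= \sum_(y in A) Num.max 0 (b y - a y).
Proof.
have len_ge0 y : 0 <= Num.max 0 (b y - a y) by rewrite le_max lexx.
move cardA : #|A| => k; elim: k A cardA L H => [|k IH] A cardA L H cover.
all: have [H0|H0] := leP H 0; first by apply: le_trans H0 (sumr_ge0 _ _).
all: have [y0 y0A /andP[ay0 by0]] := cover L (lexx L) ltac:(lra).
  by move/eqP: cardA; rewrite cards_eq0 => /eqP A0; rewrite A0 inE in y0A.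
rewrite (big_setD1 y0 y0A) /=.
suff : L + H - b y0 <= \sum_(y in A :\ y0) Num.max 0 (b y - a y).
  have : b y0 - a y0 <= Num.max 0 (b y0 - a y0) by rewrite le_max lexx orbT.
  lra.
apply: IH (b y0) _ _ => [|th h1 h2]; first by move: cardA; rewrite (cardsD1 y0 A) y0A => -[].
have [y yA /andP[ay by_]] := cover th ltac:(lra) ltac:(lra).
exists y; last by rewrite ay by_.
by rewrite in_setD1 yA andbT; apply: contraTneq by_ => ->; rewrite -leNgt.
Qed.

End RealFiniteFacts.

Lemma closed_subset_with_predecessors (T : finType) (E : rel T) (Q : {set T}) y0 :
  y0 \in Q -> (forall x w, x \in Q -> E x w -> w \in Q) ->
  (forall x, x \in Q -> exists w, E x w) ->
  exists C : {set T}, [/\ C \subset Q, exists z, z \in C,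
    forall x w, x \in C -> E x w -> w \in C &
    forall y, y \in C -> exists2 x, x \in C & E x y].
Proof.
move=> y0Q closedQ succQ.
pose closed (C : {set T}) := [forall x in C, forall w, E x w ==> (w \in C)].
have closedP (C : {set T}) : reflect (forall x w, x \in C -> E x w -> w \in C) (closed C).
  apply: (iffP forall_inP) => [cl x w xC|cl x xC]; last first.
    by apply/forallP => w; apply/implyP; apply: cl.
  by move/(_ x xC)/forallP/(_ w)/implyP: cl.
pose P (C : {set T}) := (C != finset.set0) && closed C.
have PQ : P Q by apply/andP; split; [apply/set0Pn; exists y0 | apply/closedP].
have [C /minsetP[/andP[/set0Pn[z zC] /closedP closedC] minC] CQ] := minset_exists PQ.
exists C; split => //; first by exists z.
move=> y yC; apply/exists_inP; apply: contraT => /exists_inPn no_pred.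
suff : C :\ y = C by move/setP/(_ y); rewrite in_setD1 yC eqxx.
apply: minC; last exact: subsetDl.
apply/andP; split.
  have [w Eyw] := succQ y (fintype.subsetP CQ y yC).
  apply/set0Pn; exists w; rewrite in_setD1 (closedC y w) // andbT.
  by apply: contraTneq Eyw => ->; apply: no_pred.
apply/closedP => x w; rewrite !in_setD1 => /andP[_ xC] Exw.
rewrite (closedC x w) // andbT; apply: contraTneq Exw => ->; exact: no_pred.
Qed.

Section Potentials.
Variables (R : realType) (n : nat) (G : rel 'I_n) (alpha : 'I_n -> 'I_n -> R).
Implicit Types (wt : 'I_n -> 'I_n -> R) (p q r : 'I_n -> R).

Lemma le_alpha_in wt u v : G u v -> wt u v <= alpha_in G wt v.
Proof. exact: le_bigmax_cond. Qed.

Lemma le_alpha_out wt u v : G v u -> wt v u <= alpha_out G wt v.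
Proof. exact: le_bigmax_cond. Qed.

Lemma rhoR_ge0 wt v : 0 <= rhoR G wt v.
Proof. by rewrite le_max lexx. Qed.

Hypothesis in_edge : forall v, exists u, G u v.
Hypothesis out_edge : forall v, exists u, G v u.

Lemma alpha_in_attained wt v : exists2 u, G u v & alpha_in G wt v = wt u v.
Proof.
apply: bigmax_attained; case: pickP => // no_in.
by have [u] := in_edge v; rewrite no_in.
Qed.

Lemma alpha_out_attained wt v : exists2 u, G v u & alpha_out G wt v = wt v u.
Proof.
apply: (@bigmax_attained _ _ (G v) (wt v)); case: pickP => // no_out.
by have [u] := out_edge v; rewrite no_out.
Qed.

Lemma alpha_in_le wt v M : (forall u, G u v -> wt u v <= M) -> alpha_in G wt v <= M.
Proof. by move=> le_M; have [u Guv ->] := alpha_in_attained wt v; apply: le_M. Qed.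

Lemma alpha_out_le wt v M : (forall u, G v u -> wt v u <= M) -> alpha_out G wt v <= M.
Proof. by move=> le_M; have [u Gvu ->] := alpha_out_attained wt v; apply: le_M. Qed.

(* Raising [v] by [d] amounts to adding [d] to a potential at [v] (self-loops *)
(* are left untouched), so the states of the dynamics are the [shifted] weights *)
(* of the raised amounts ([state_shifted]). *)
Definition shifted p a b :=
  if G a b && (a != b) then alpha a b + (p b - p a) else alpha a b.

Definition in_weight p v := alpha_in G (shifted p) v.
Definition out_weight p v := alpha_out G (shifted p) v.
Definition balanced p := forall v, out_weight p v <= in_weight p v.

Lemma shifted_edge p a b : G a b -> a != b -> shifted p a b = alpha a b + (p b - p a).
Proof. by move=> Gab ab; rewrite /shifted Gab ab. Qed.

Lemma shifted_loop p a : shifted p a a = alpha a a.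
Proof. by rewrite /shifted eqxx andbF. Qed.

(* Compared with [shifted p], the edges leaving [v] in [shifted r] gain at most *)
(* [p v - r v] and the best edge entering [v] loses at most as much. *)
Lemma raise_le_balanced r p v : (forall u, r u <= p u) -> balanced p ->
  r v + rhoR G (shifted r) v / 2 <= p v.
Proof.
move=> rp bal_p; set D := p v - r v.
suff : rhoR G (shifted r) v <= 2 * D by rewrite /D; lra.
rewrite ge_max mulr_ge0 ?subr_ge0 //=.
suff : out_weight r v <= in_weight r v + 2 * D by rewrite /out_weight /in_weight; lra.
apply: alpha_out_le => w Gvw.
have [/eqP wv|wv] := boolP (w == v).
  subst w; have := le_alpha_in (shifted r) Gvw; rewrite -/(in_weight r v) /D.
  by have := rp v; lra.
have [u Guv in_p] := alpha_in_attained (shifted p) v.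
have out_r : shifted r v w <= shifted p v w + D.
  by rewrite !shifted_edge // 1?eq_sym //; have := rp w; rewrite /D; lra.
have in_r : shifted p u v <= in_weight r v + D.
  have := le_alpha_in (shifted r) Guv; rewrite -/(in_weight r v).
  have [/eqP uv|uv] := boolP (u == v).
    by subst u; rewrite !shifted_loop /D; have := rp v; lra.
  by rewrite !shifted_edge // /D; have := rp u; lra.
have := bal_p v; have := le_alpha_out (shifted p) Gvw.
rewrite /out_weight /in_weight in in_r *; rewrite in_p; lra.
Qed.

Section LeastBalanced.
Variable p : 'I_n -> R.
Hypothesis p_ge0 : forall v, 0 <= p v.
Hypothesis bal_p : balanced p.
Hypothesis p_least : forall q, (forall v, 0 <= q v) -> balanced q -> forall v, p v <= q v.

Definition lowered (C : {set 'I_n}) e v := if v \in C then p v - e else p v.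

Lemma shifted_lowered C e a b : shifted (lowered C e) a b = shifted p a b +
  (if G a b && (a != b) then (if a \in C then e else 0) - (if b \in C then e else 0) else 0).
Proof.
rewrite /shifted /lowered; case: (G a b && (a != b)); last by rewrite addr0.
by case: (a \in C); case: (b \in C); lra.
Qed.

(* Lowering [C] cannot unbalance a vertex outside [C], so by minimality of [p] *)
(* it must unbalance one inside. *)
Lemma lowered_unbalanced (C : {set 'I_n}) e z0 :
  0 < e -> z0 \in C -> (forall z, z \in C -> e <= p z) ->
  ~ (forall z, z \in C -> out_weight (lowered C e) z <= in_weight (lowered C e) z).
Proof.
move=> e_gt0 z0C e_le_p balC.
have q_ge0 v : 0 <= lowered C e v.
  by rewrite /lowered; case: ifP => vC; rewrite ?subr_ge0 ?e_le_p.
suff bal_q : balanced (lowered C e).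
  by have := p_least q_ge0 bal_q z0; rewrite /lowered z0C; lra.
move=> z; have [zC|zC] := boolP (z \in C); first exact: balC.
have out_le : out_weight (lowered C e) z <= out_weight p z.
  apply: alpha_out_le => w Gzw; apply: le_trans (le_alpha_out _ Gzw).
  rewrite shifted_lowered Gzw (negbTE zC) /=.
  by case: (z != w); case: (w \in C); rewrite /=; lra.
have in_ge : in_weight p z <= in_weight (lowered C e) z.
  rewrite /in_weight; have [u Guz ->] := alpha_in_attained (shifted p) z.
  apply: le_trans (le_alpha_in _ Guz); rewrite shifted_lowered Guz (negbTE zC) /=.
  by case: (u != z); case: (u \in C); rewrite /=; lra.
by have := bal_p z; lra.
Qed.

Lemma balanced_tight z : 0 < p z -> out_weight p z = in_weight p z.
Proof.
move=> pz_gt0; apply/eqP; rewrite eq_le bal_p leNgt; apply/negP => slack.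
pose e := Num.min (p z) ((in_weight p z - out_weight p z) / 2).
have e_gt0 : 0 < e by rewrite lt_min pz_gt0 /=; lra.
have e_le : e <= (in_weight p z - out_weight p z) / 2 by rewrite ge_min lexx orbT.
apply: (@lowered_unbalanced [set z] e z) => //; first by rewrite inE.
  by move=> z'; rewrite inE => /eqP ->; rewrite ge_min lexx.
move=> z'; rewrite inE => /eqP ->.
have out_le : out_weight (lowered [set z] e) z <= out_weight p z + e.
  apply: alpha_out_le => w Gzw; have := le_alpha_out (shifted p) Gzw.
  rewrite shifted_lowered Gzw inE eqxx /= -/(out_weight p z).
  by case: (z != w); case: (w \in [set z]); rewrite /=; lra.
have in_ge : in_weight p z - e <= in_weight (lowered [set z] e) z.
  rewrite /in_weight; have [u Guz ->] := alpha_in_attained (shifted p) z.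
  apply: le_trans (le_alpha_in _ Guz); rewrite shifted_lowered Guz [z \in _]inE eqxx /=.
  by case: (u != z); case: (u \in [set z]); rewrite /=; lra.
by lra.
Qed.

(* Such a set could be lowered slightly while staying balanced. *)
Lemma no_tight_closed_set (C : {set 'I_n}) L z0 :
  z0 \in C -> (forall z, z \in C -> 0 < p z) -> (forall z, z \in C -> out_weight p z = L) ->
  (forall x w, x \in C -> G x w -> shifted p x w = L -> w \in C) ->
  (forall z, z \in C -> exists2 x, x \in C & G x z && (shifted p x z == L)) -> False.
Proof.
move=> z0C p_gt0 outL closedC predC.
pose leaving (xw : 'I_n * 'I_n) := [&& xw.1 \in C, xw.2 \notin C & G xw.1 xw.2].
have slack_gt0 xw : leaving xw -> 0 < L - shifted p xw.1 xw.2.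
  case: xw => x w /and3P[/= xC wC Gxw]; rewrite subr_gt0 lt_neqAle -(outL x xC).
  rewrite le_alpha_out // andbT; apply/eqP => eq_out.
  by move: wC; rewrite (closedC x w) // eq_out outL.
have [e1 e1_gt0 e1_le] := exists_pos_lower_bound slack_gt0.
have [e2 e2_gt0 e2_le] := exists_pos_lower_bound (P := [pred z | z \in C]) p_gt0.
pose e := Num.min e1 e2.
have e_gt0 : 0 < e by rewrite lt_min e1_gt0 e2_gt0.
apply: (@lowered_unbalanced C e z0) => // [z zC|z zC].
  by apply: le_trans (e2_le z zC); rewrite ge_min lexx orbT.
apply: (@le_trans _ _ L).
  apply: alpha_out_le => w Gzw; rewrite shifted_lowered Gzw zC.
  have := le_alpha_out (shifted p) Gzw; rewrite -/(out_weight p z) outL // => le_L.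
  have [/eqP zw|zw] := boolP (z == w); first by subst w; rewrite /= addr0.
  rewrite /=; case: ifP => wC; first by lra.
  have : e <= e1 by rewrite ge_min lexx.
  have := e1_le (z, w); rewrite /leaving /= zC wC Gzw /=; lra.
have [x xC /andP[Gxz /eqP xzL]] := predC z zC.
apply: le_trans (le_alpha_in _ Gxz); rewrite shifted_lowered Gxz xC zC xzL.
by case: (x != z); rewrite /= ?subrr addr0.
Qed.


Section Gap.
Variables (U : {set 'I_n}) (gap : R) (x0 : 'I_n).
Hypothesis gap_gt0 : 0 < gap.
Hypothesis x0_notin : x0 \notin U.
Hypothesis gapU : forall u x, u \in U -> x \notin U -> p x + gap <= p u.

Lemma gap_le_p u : u \in U -> gap <= p u.
Proof. by move=> uU; have := gapU uU x0_notin; have := p_ge0 x0; lra. Qed.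

Lemma crossing_edge ys : ys \in U -> (forall y, y \in U -> in_weight p y <= in_weight p ys) ->
  exists x w, [/\ x \in U, w \notin U, G x w & in_weight p ys <= shifted p x w].
Proof.
move=> ysU ys_max; set L := in_weight p ys; apply: contrapT => no_edge.
have below x w : x \in U -> w \notin U -> G x w -> shifted p x w < L.
  by move=> xU wU Gxw; rewrite ltNge; apply/negP => le_L; apply: no_edge; exists x, w.
have tightU y : y \in U -> out_weight p y = in_weight p y.
  by move=> yU; apply: balanced_tight; apply: lt_le_trans (gap_le_p yU).
pose Q := [set y in U | in_weight p y == L].
have QP y : reflect (y \in U /\ in_weight p y = L) (y \in Q).
  by rewrite inE; apply: (iffP andP) => -[-> /eqP].
pose E := [rel x w | G x w && (shifted p x w == L)].
have closedQ x w : x \in Q -> E x w -> w \in Q.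
  move=> /QP[xU _] /andP[Gxw /eqP xwL].
  have wU : w \in U by apply: contraT => wU; have := below x w xU wU Gxw; rewrite xwL ltxx.
  apply/QP; split => //; apply/eqP; rewrite eq_le ys_max //=.
  by rewrite -xwL le_alpha_in.
have succQ x : x \in Q -> exists w, E x w.
  move=> /QP[xU xL]; have [w Gxw out_w] := alpha_out_attained (shifted p) x.
  by exists w; rewrite /= Gxw -out_w -/(out_weight p x) tightU // xL eqxx.
have ysQ : ys \in Q by apply/QP.
have [C [CQ [z zC] closedC predC]] := closed_subset_with_predecessors ysQ closedQ succQ.
have CU y : y \in C -> y \in U /\ in_weight p y = L by move=> /(fintype.subsetP CQ)/QP.
apply: (@no_tight_closed_set C L z zC) => [y yC|y yC|x w xC Gxw xwL|].
- by have [yU _] := CU y yC; apply: lt_le_trans (gap_le_p yU).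
- by have [yU yL] := CU y yC; rewrite tightU.
- by apply: closedC xC _; rewrite /= Gxw xwL eqxx.
- exact: predC.
Qed.

Lemma threshold_vertex L x w : (forall y, y \in U -> in_weight p y <= L) ->
  x \in U -> w \notin U -> G x w -> L <= shifted p x w ->
  forall th, L <= th -> th < L + gap ->
  exists2 y, y \in U & alpha_in G alpha y <= th < alpha_out G alpha y.
Proof.
move=> L_max xU wU Gxw Lxw th Lth th_lt.
have xw : x != w by apply: contraNneq wU => <-.
pose Y := [pred y | (y \in U) && [exists z, [&& G y z, y != z & th < alpha y z]]].
have xY : Y x.
  rewrite /= xU; apply/existsP; exists w; rewrite Gxw xw /=.
  by move: Lxw; rewrite shifted_edge //; have := gapU xU wU; lra.
case: (arg_maxP p xY) => y /andP[yU /existsP[z /and3P[Gyz yz th_z]]] y_max.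
exists y => //; rewrite (lt_le_trans th_z (le_alpha_out _ Gyz)) andbT.
apply: alpha_in_le => u Guy; rewrite leNgt; apply/negP => th_u.
have := le_alpha_in (shifted p) Guy; rewrite -/(in_weight p y) => u_in.
have [/eqP uy|uy] := boolP (u == y).
  by subst u; have := L_max y yU; rewrite shifted_loop in u_in; lra.
rewrite shifted_edge // in u_in.
have uU : u \in U by apply: contraT => uU; have := gapU yU uU; have := L_max y yU; lra.
have uY : Y u by rewrite /= uU; apply/existsP; exists y; rewrite Guy uy th_u.
by have /= := y_max u uY; have := L_max y yU; lra.
Qed.

Lemma gap_le_sum_rhoR u0 : u0 \in U -> gap <= \sum_v rhoR G alpha v.
Proof.
move=> u0U; case: (arg_maxP (in_weight p) u0U) => ys ysU ys_max.
have [x [w [xU wU Gxw Lxw]]] := crossing_edge ysU ys_max.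
apply: le_trans (cover_le_sum_lengths (threshold_vertex ys_max xU wU Gxw Lxw)) _.
rewrite [X in _ <= X](bigID (mem U)) /= lerDl.
by apply: sumr_ge0 => v _; apply: rhoR_ge0.
Qed.

End Gap.

Lemma next_value_le a b : p a < p b ->
  exists2 v, p a < p v & p v <= p a + \sum_v rhoR G alpha v.
Proof.
move=> ab; case: (arg_minP (P := [pred v | p a < p v]) p ab) => /= u0 u0U u0_min.
exists u0 => //; suff : p u0 - p a <= \sum_v rhoR G alpha v by lra.
apply: (@gap_le_sum_rhoR [set v | p a < p v] _ a _ _ _ u0); rewrite ?inE ?ltxx ?subr_gt0 //.
move=> u x; rewrite !inE -leNgt => uU xa.
by have /= := u0_min u uU; lra.
Qed.

Lemma least_balanced_range a b : p b - p a <= (n.-1)%:R * \sum_v rhoR G alpha v.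
Proof.
have S_ge0 : 0 <= \sum_v rhoR G alpha v by apply: sumr_ge0 => v _; apply: rhoR_ge0.
by have := range_le_card_mul S_ge0 next_value_le a b; rewrite card_ord.
Qed.

End LeastBalanced.

Lemma out_sub_in_weight_le f g e v : (forall u, `|f u - g u| <= e) ->
  out_weight f v - in_weight f v <= out_weight g v - in_weight g v + 4 * e.
Proof.
move=> fg; have {}fg u : - e <= f u - g u <= e by rewrite -ler_norml.
have close u u' : shifted f u u' <= shifted g u u' + 2 * e.
  rewrite /shifted; case: (_ && _) => //; last by have := fg u; lra.
  by case/andP: (fg u) => *; case/andP: (fg u') => *; lra.
have close' u u' : shifted g u u' <= shifted f u u' + 2 * e.
  rewrite /shifted; case: (_ && _) => //; last by have := fg u; lra.
  by case/andP: (fg u) => *; case/andP: (fg u') => *; lra.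
have out_fg : out_weight f v <= out_weight g v + 2 * e.
  by apply: alpha_out_le => w Gvw; apply: le_trans (close _ _) _; rewrite lerD2r le_alpha_out.
have in_gf : in_weight g v <= in_weight f v + 2 * e.
  by apply: alpha_in_le => u Guv; apply: le_trans (close' _ _) _; rewrite lerD2r le_alpha_in.
lra.
Qed.

Variable s : nat -> 'I_n.

Lemma raisedS v t : raised G s alpha v t.+1 =
  raised G s alpha v t + (if s t == v then rhoR G (state G s alpha t) v / 2 else 0).
Proof. by rewrite /raised big_mkcond big_ord_recr /= -big_mkcond. Qed.

Lemma raised0 v : raised G s alpha v 0 = 0.
Proof. exact: big_ord0. Qed.

Lemma raised_ge0 v t : 0 <= raised G s alpha v t.
Proof. by apply: sumr_ge0 => k _; rewrite divr_ge0 ?rhoR_ge0. Qed.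

Lemma state_shifted t : state G s alpha t = shifted (raised G s alpha ^~ t).
Proof.
elim: t => [|t IH] /=.
  by apply/funext => a; apply/funext => b; rewrite /shifted !raised0 subrr addr0 if_same.
rewrite IH /raise; set d := rhoR G _ _ / 2.
have raisedS' v : raised G s alpha v t.+1 = raised G s alpha v t + (if s t == v then d else 0).
  by rewrite raisedS IH; case: eqP => // <-.
apply/funext => a; apply/funext => b; rewrite /shifted !raisedS'.
case: (G a b) => //=; have [<-|ab] := eqVneq a b; first by rewrite !andbN.
rewrite /= ![s t == _]eq_sym.
by have [_|_] := eqVneq b (s t); have [_|_] := eqVneq a (s t) => //=; lra.
Qed.

Lemma raised_le_balanced p : (forall u, 0 <= p u) -> balanced p ->
  forall t v, raised G s alpha v t <= p v.
Proof.
move=> p_ge0 bal_p; elim=> [|t IH] v; first by rewrite raised0.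
rewrite raisedS state_shifted; case: eqP => [<-|_]; last by rewrite addr0.
exact: raise_le_balanced.
Qed.

Section Limit.
Local Open Scope classical_set_scope.
Variable rstar : 'I_n -> R.
Hypothesis fair_s : fair s.
Hypothesis raised_cvg : forall v, (fun t => raised G s alpha v t) @ \oo --> rstar v.

Lemma limit_ge0 v : 0 <= rstar v.
Proof.
apply: (closed_cvg _ (@closed_ge R 0) _ _ (@raised_cvg v)).
by apply: nearW => t; apply: raised_ge0.
Qed.

Lemma limit_le_balanced q : (forall u, 0 <= q u) -> balanced q ->
  forall v, rstar v <= q v.
Proof.
move=> q_ge0 bal_q v; apply: (closed_cvg _ (@closed_le R (q v)) _ _ (@raised_cvg v)).
by apply: nearW => t; apply: raised_le_balanced.
Qed.

(* Near the limit, a raising step at [v] moves [r_v] by [rhoR / 2], which must *)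
(* therefore be small, while the imbalance at [v] is continuous in the potential. *)
Lemma limit_balanced : balanced rstar.
Proof.
move=> v; apply/ler_addgt0Pr => e e_gt0.
pose d := e / 8; have d_gt0 : 0 < d by rewrite divr_gt0.
have near_limit : \forall t \near \oo, forall u, `|rstar u - raised G s alpha u t| < d.
  by apply: filter_forall => u; move/cvgrPdist_lt: (@raised_cvg u) => /(_ d d_gt0).
have [N _ closeN] := near_limit.
have [k [Nk skv]] := fair_s v N.
have close_k := closeN k Nk; have close_k1 := closeN k.+1 (leqW Nk).
have rho_small : rhoR G (shifted (raised G s alpha ^~ k)) v < 4 * d.
  have := raisedS v k; rewrite skv eqxx state_shifted => step.
  by have := close_k v; have := close_k1 v; rewrite step !ltr_norml; lra.
have imbalance_le : out_weight (raised G s alpha ^~ k) v -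
    in_weight (raised G s alpha ^~ k) v <= rhoR G (shifted (raised G s alpha ^~ k)) v.
  by rewrite le_max lexx orbT.
have := out_sub_in_weight_le v (fun u => ltW (close_k u)).
rewrite /d in rho_small *; lra.
Qed.

End Limit.

End Potentials.

Section StrongConnectivity.
Variables (n : nat) (G : rel 'I_n).
Hypotheses (scG : strongly_connected G) (n_gt1 : (1 < n)%N).

Lemma exists_other_vertex (v : 'I_n) : exists u, u != v.
Proof.
have : (0 < #|[set~ v]|)%N by rewrite cardsC1 card_ord; lia.
by case/card_gt0P => u; rewrite !inE; exists u.
Qed.

Lemma strongly_connected_in_edge v : exists u, G u v.
Proof.
have [u uv] := exists_other_vertex v; have /connectP[p Gp v_last] := scG u v.
case/lastP: p Gp v_last => [_ /= vu|p z]; first by rewrite vu eqxx in uv.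
by rewrite last_rcons rcons_path => /andP[_ Gz] ->; exists (last u p).
Qed.

Lemma strongly_connected_out_edge v : exists w, G v w.
Proof.
have [u uv] := exists_other_vertex v; have /connectP[p Gp u_last] := scG v u.
case: p Gp u_last => [_ /= uv'|z p /= /andP[Gvz _] _]; last by exists z.
by rewrite uv' eqxx in uv.
Qed.

End StrongConnectivity.

Local Open Scope classical_set_scope.

Theorem proposition3 (R : realType) (n : nat) (G : rel 'I_n)
  (alpha : 'I_n -> 'I_n -> R) (s : nat -> 'I_n) (rstar : 'I_n -> R) :
  strongly_connected G -> fair s ->
  (forall v : 'I_n, (fun t : nat => raised G s alpha v t) @ \oo --> rstar v) ->
  let y := fun v => - rstar v in
  fmax y - fmin y <= (n%:R - 1) * \sum_(v : 'I_n) rhoR G alpha v.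
Proof.
move=> scG fair_s raised_cvg /=; set S := \sum_(v : 'I_n) rhoR G alpha v.
have bound_ge0 : 0 <= (n%:R - 1) * S.
  case En : n => [|m].
    by rewrite /S big1 ?mulr0 // => i _; move: (ltn_ord i); rewrite {2}En.
  by rewrite -natr1 addrK mulr_ge0 ?sumr_ge0 // => v _; apply: rhoR_ge0.
apply: fmax_sub_fmin_le => // a b; rewrite opprK addrC.
have [n_le1|n_gt1] := leqP n 1.
  suff -> : b = a by rewrite subrr.
  by apply: ord_inj; have := ltn_ord a; have := ltn_ord b; lia.
have in_edge := strongly_connected_in_edge scG n_gt1.
have out_edge := strongly_connected_out_edge scG n_gt1.
have := least_balanced_range in_edge out_edge (limit_ge0 raised_cvg)
  (limit_balanced in_edge out_edge fair_s raised_cvg)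
  (limit_le_balanced in_edge out_edge raised_cvg) a b.
by rewrite -subn1 natrB // ltnW.
Qed.
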